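(* Let $(V,P)$ be an irreducible, reversible Markov process on a finite state space $V$ with stationary distribution $\pi$. Let $\xi\in\mathbb{R}^V$ with $\sum_{v\in V}\xi_v=0$, let $D=\mathrm{diag}(\pi)$ and $\widetilde{\xi}=D^{-1/2}\xi$. Then: (1) for every integer $t\geq 1$, $R_{\mathrm{eff}}(P;\xi)\leq t\cdot R_{\mathrm{eff}}(P^t;\xi)$; (2) if $\delta$ is the spectral gap of $P$, then $R_{\mathrm{eff}}(P;\xi)\leq \|\widetilde{\xi}\|_2^2/\delta$.
   Context: A Markov process $(V,P)$ has a row-stochastic transition matrix $P\in\mathbb{R}_{\ge 0}^{V\times V}$; it is irreducible if for all $v,w$ some power $P^t$ has $(P^t)_{vw}>0$ (then its stationary distribution $\pi=\pi P$ is unique and positive), and a process $Q$ is reversible with respect to $\pi$ if $\pi_vQ_{vw}=\pi_wQ_{wv}$ for all $v,w$ (if $P$ is, so is $P^t$). For a process $Q$ reversible with respect to $\pi$, associate the undirected graph on $V$ with an edge $\{v,w\}$ whenever $Q_{vw}>0$, with resistance $r_{\{v,w\}}=1/(\pi_vQ_{vw})$; each edge gets an arbitrary orientation. A flow is $f:E\to\mathbb{R}$ with net-flow $\delta_f(v)=\sum_{e\text{ out of }v}f_e-\sum_{e\text{ into }v}f_e$ and energy $\sum_e r_ef_e^2$. $R_{\mathrm{eff}}(Q;\xi)$ is the minimum energy of a flow with net-flow $\xi$ in this graph (taken to be $+\infty$ if no such flow exists). The spectral gap of $P$ is $\delta=1-\max\{\lambda:\lambda\text{ an eigenvalue of }P,\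 \lambda<1\}$, i.e. every eigenvalue $\lambda<1$ of $P$ satisfies $\lambda\le 1-\delta$. *)

From HB Require Import structures.
From mathcomp Require Import all_boot all_order all_algebra.
From mathcomp Require Import boolp classical_sets reals constructive_ereal ereal.
Set Implicit Arguments. Unset Strict Implicit. Unset Printing Implicit Defensive.
Import Order.TTheory GRing.Theory Num.Theory.
Local Open Scope ring_scope.
Local Open Scope classical_set_scope.

Section Markov.
Variables (R : realType) (n : nat).
Implicit Types (P Q : 'M[R]_n) (pi xi : 'I_n -> R).

Definition row_stochastic P :=
  (forall v w, 0 <= P v w) /\ (forall v, \sum_w P v w = 1).

Definition irreducible P := forall v w, exists t : nat, 0 < (P ^+ t) v w.

Definition stationary_distribution P pi :=
  (forall v, 0 <= pi v) /\ \sum_v pi v = 1 /\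
  (forall w, \sum_v pi v * P v w = pi w).

Definition reversible P pi := forall v w, pi v * P v w = pi w * P w v.

(* The undirected graph of Q: an edge {v,w} whenever Q v w > 0.  Each edge
   {v,w} is oriented from the smaller index v to the larger w (v <= w; loops
   allowed), so oriented edges are pairs (v,w) with v <= w and 0 < Q v w. *)
Definition is_edge Q (v w : 'I_n) : bool := (v <= w)%N && (0 < Q v w).

(* A flow is a real function on oriented edges; we represent it as a function
   on pairs which vanishes off the edge set. *)
Definition is_flow Q (f : 'I_n -> 'I_n -> R) :=
  forall v w, ~~ is_edge Q v w -> f v w = 0.

Definition net_flow (f : 'I_n -> 'I_n -> R) (v : 'I_n) : R :=
  \sum_w f v w - \sum_u f u v.

Definition resistance Q pi (v w : 'I_n) : R := (pi v * Q v w)^-1.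

Definition energy Q pi (f : 'I_n -> 'I_n -> R) : R :=
  \sum_v \sum_w (if is_edge Q v w then resistance Q pi v w * f v w ^+ 2 else 0).

(* Effective resistance: the minimum (infimum, which is attained) energy of
   a flow with net-flow xi; +oo if there is no such flow. *)
Definition Reff Q pi xi : \bar R :=
  ereal_inf [set (energy Q pi f)%:E | f in
     [set f | is_flow Q f /\ forall v, net_flow f v = xi v]].

Definition spectral_gap P (delta : R) :=
  (exists lam, eigenvalue P lam /\ lam < 1 /\ lam = 1 - delta) /\
  (forall lam, eigenvalue P lam -> lam < 1 -> lam <= 1 - delta).

End Markov.

From HB Require Import structures.
From mathcomp Require Import all_boot all_order all_algebra.
From mathcomp Require Import boolp classical_sets reals constructive_ereal ereal.
From mathcomp Require Import complex.
From mathcomp Require Import ring lra.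
Import Order.TTheory GRing.Theory Num.Theory.
Local Open Scope ring_scope.
Set Implicit Arguments. Unset Strict Implicit. Unset Printing Implicit Defensive.

(* Write [E_Q(a) = <a, (I - Q) a>_pi] for the Dirichlet form and let [phi] solve
   the Laplace equation [pi (I - P) phi = xi]; it is solvable because [xi] sums to
   zero and, by irreducibility, only constants are harmonic.  The potential flow of
   [phi] has net flow [xi] and energy [E_P(phi)], so [R_eff(P; xi) <= E_P(phi)].
   Conversely, completing the square edge by edge gives
   [2 <psi, xi> - E_Q(psi) <= energy g] for every flow [g] with net flow [xi].
   (1) Take [Q = P^t] and [psi = phi / t].  Since [-I <= P <= I] for the
   [pi]-inner product, each increment [<a, P^s (I - P) a>] is at most [E_P(a)],
   so [E_(P^t)(phi) <= t E_P(phi)] and [R_eff(P^t; xi) >= E_P(phi) / t].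
   (2) The spectral theorem for the symmetric matrix [D^(1/2) P D^(-1/2)] yields
   the Poincare inequality [delta Var_pi(b) <= E_P(b)].  For [b = phi - mean],
   [E_P(phi) = <b, xi> <= delta/2 Var_pi(b) + |D^(-1/2) xi|^2 / (2 delta)], and the
   first term is at most [E_P(phi) / 2]. *)

Section DirichletForm.
Variables (R : realType) (n : nat).
Implicit Types (Q : 'M[R]_n) (pi a b c : 'I_n -> R).

Definition wdot pi a b := \sum_v pi v * a v * b v.
Definition mxapp Q a v := \sum_w Q v w * a w.
Definition dirichlet Q pi a := wdot pi a a - wdot pi a (mxapp Q a).
Definition laplacian Q pi a v := pi v * (a v - mxapp Q a v).

Variable pi : 'I_n -> R.

Lemma wdotC a b : wdot pi a b = wdot pi b a.
Proof. by apply: eq_bigr => v _; ring. Qed.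

Lemma wdotBl a b c : wdot pi (fun v => a v - b v) c = wdot pi a c - wdot pi b c.
Proof. by rewrite /wdot -sumrB; apply: eq_bigr => v _; ring. Qed.

Lemma wdotBr a b c : wdot pi c (fun v => a v - b v) = wdot pi c a - wdot pi c b.
Proof. by rewrite wdotC wdotBl !(wdotC c). Qed.

Lemma wdotZl k a b : wdot pi (fun v => k * a v) b = k * wdot pi a b.
Proof. by rewrite /wdot mulr_sumr; apply: eq_bigr => v _; ring. Qed.

Lemma wdotZr k a b : wdot pi a (fun v => k * b v) = k * wdot pi a b.
Proof. by rewrite wdotC wdotZl wdotC. Qed.

Lemma wdot_ge0 a : (forall v, 0 <= pi v) -> 0 <= wdot pi a a.
Proof.
by move=> pi_ge0; apply: sumr_ge0 => v _; rewrite -mulrA mulr_ge0 // -expr2 sqr_ge0.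
Qed.

Lemma mxappB Q a b : mxapp Q (fun v => a v - b v) = fun v => mxapp Q a v - mxapp Q b v.
Proof. by apply: funext => v; rewrite /mxapp -sumrB; apply: eq_bigr => w _; ring. Qed.

Lemma mxappZ Q k a : mxapp Q (fun v => k * a v) = fun v => k * mxapp Q a v.
Proof. by apply: funext => v; rewrite /mxapp mulr_sumr; apply: eq_bigr => w _; ring. Qed.

Lemma mxapp1 a : mxapp 1 a = a.
Proof.
apply: funext => v; rewrite /mxapp (bigD1 v) //= mxE eqxx mul1r big1 ?addr0 //.
by move=> w /negbTE wv; rewrite mxE eq_sym wv mul0r.
Qed.

Lemma mxappM Q Q' a : mxapp (Q * Q') a = mxapp Q (mxapp Q' a).
Proof.
apply: funext => v; rewrite /mxapp.
under eq_bigr => w _ do rewrite -mulmxE mxE mulr_suml.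
rewrite exchange_big /=; apply: eq_bigr => k _.
by rewrite mulr_sumr; apply: eq_bigr => w _; rewrite mulrA.
Qed.

Lemma dirichletZ Q k a : dirichlet Q pi (fun v => k * a v) = k ^+ 2 * dirichlet Q pi a.
Proof. by rewrite /dirichlet mxappZ !wdotZl !wdotZr; ring. Qed.

Lemma dirichlet_laplacian Q a : dirichlet Q pi a = \sum_v a v * laplacian Q pi a v.
Proof.
by rewrite /dirichlet /wdot -sumrB; apply: eq_bigr => v _; rewrite /laplacian; ring.
Qed.

Section Reversible.
Variable Q : 'M[R]_n.
Hypothesis Qst : forall v, \sum_w Q v w = 1.
Hypothesis Qrev : reversible Q pi.
Hypothesis Qge0 : forall v w, 0 <= Q v w.
Hypothesis pi_ge0 : forall v, 0 <= pi v.

Lemma wdot_mxappC a b : wdot pi (mxapp Q a) b = wdot pi a (mxapp Q b).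
Proof.
rewrite /wdot /mxapp.
under eq_bigr => v _ do rewrite mulr_sumr mulr_suml.
under [RHS]eq_bigr => v _ do rewrite mulr_sumr.
rewrite exchange_big /=; apply: eq_bigr => w _; apply: eq_bigr => v _.
by rewrite mulrA Qrev; ring.
Qed.

Lemma sum_edges_sqr k a :
  \sum_v \sum_w pi v * Q v w * (a v + k * a w) ^+ 2 =
  (1 + k ^+ 2) * wdot pi a a + 2 * k * wdot pi a (mxapp Q a).
Proof.
have row_sum b : \sum_v \sum_w pi v * Q v w * b v = \sum_v pi v * b v.
  by apply: eq_bigr => v _; rewrite -mulr_suml -mulr_sumr Qst mulr1.
have col_sum b : \sum_v \sum_w pi v * Q v w * b w = \sum_v pi v * b v.
  rewrite exchange_big /= -row_sum; apply: eq_bigr => w _.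
  by apply: eq_bigr => v _; rewrite Qrev.
have cross : \sum_v \sum_w pi v * Q v w * (a v * a w) = wdot pi a (mxapp Q a).
  by apply: eq_bigr => v _; rewrite /mxapp !mulr_sumr; apply: eq_bigr => w _; ring.
transitivity (\sum_v \sum_w pi v * Q v w * (a v * a v)
  + k ^+ 2 * \sum_v \sum_w pi v * Q v w * (a w * a w)
  + 2 * k * \sum_v \sum_w pi v * Q v w * (a v * a w)).
  rewrite !mulr_sumr -!big_split /=; apply: eq_bigr => v _.
  by rewrite !mulr_sumr -!big_split /=; apply: eq_bigr => w _; ring.
rewrite row_sum (col_sum (fun w => a w * a w)) cross /wdot.
under eq_bigr => v _ do rewrite mulrA.
ring.
Qed.

Lemma dirichletE a :
  \sum_v \sum_w pi v * Q v w * (a v - a w) ^+ 2 = 2 * dirichlet Q pi a.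
Proof.
rewrite /dirichlet.
transitivity ((1 + (-1) ^+ 2) * wdot pi a a + 2 * (-1) * wdot pi a (mxapp Q a)); last ring.
rewrite -sum_edges_sqr.
by apply: eq_bigr => v _; apply: eq_bigr => w _; rewrite mulN1r.
Qed.

Lemma sum_edges_sqr_ge0 k a :
  0 <= (1 + k ^+ 2) * wdot pi a a + 2 * k * wdot pi a (mxapp Q a).
Proof.
rewrite -sum_edges_sqr; apply: sumr_ge0 => v _; apply: sumr_ge0 => w _.
by rewrite mulr_ge0 ?sqr_ge0 ?mulr_ge0.
Qed.

Lemma dirichlet_ge0 a : 0 <= dirichlet Q pi a.
Proof. by have := sum_edges_sqr_ge0 (-1) a; rewrite sqrrN expr1n /dirichlet; lra. Qed.

Lemma wdot_mxapp_ge a : - wdot pi a a <= wdot pi a (mxapp Q a).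
Proof. by have := sum_edges_sqr_ge0 1 a; rewrite expr1n; lra. Qed.

(* [E(a) - E(Qa) = <u, (I + Q) u>_pi >= 0] for [u = a - Qa]. *)
Lemma dirichlet_mxapp_le a : dirichlet Q pi (mxapp Q a) <= dirichlet Q pi a.
Proof.
have := wdot_mxapp_ge (fun v => a v - mxapp Q a v).
rewrite mxappB !wdotBl !wdotBr /dirichlet.
rewrite -(wdot_mxappC a (mxapp Q a)) (wdotC (mxapp Q a) a).
lra.
Qed.

Lemma dirichlet_increment_le s a :
  wdot pi a (mxapp (Q ^+ s) a) - wdot pi a (mxapp (Q ^+ s.+1) a) <= dirichlet Q pi a.
Proof.
elim/ltn_ind: s a => -[|[|s]] IH a.
- by rewrite expr0 expr1 mxapp1.
- have := wdot_ge0 (fun v => a v - mxapp Q a v) pi_ge0.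
  rewrite expr1 expr2 mxappM !wdotBl !wdotBr -(wdot_mxappC a (mxapp Q a)).
  by rewrite (wdotC (mxapp Q a) a) /dirichlet; lra.
(* Two more steps replace [a] by [Qa], and [E(Qa) <= E(a)]. *)
have shift k :
    wdot pi a (mxapp (Q ^+ k.+2) a) = wdot pi (mxapp Q a) (mxapp (Q ^+ k) (mxapp Q a)).
  by rewrite exprS exprSr !mxappM wdot_mxappC.
rewrite (shift s) (shift s.+1); apply: le_trans (dirichlet_mxapp_le a).
exact: IH.
Qed.

Lemma dirichletX_le t a : dirichlet (Q ^+ t) pi a <= t%:R * dirichlet Q pi a.
Proof.
elim: t => [|t IH]; first by rewrite /dirichlet expr0 mxapp1 subrr mul0r.
have := dirichlet_increment_le t a; rewrite /dirichlet in IH * => inc.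
rewrite mulrSr; lra.
Qed.
End Reversible.
End DirichletForm.

Section Powers.
Variables (R : realType) (n : nat) (pi : 'I_n -> R).
Implicit Types (A B : 'M[R]_n).

Lemma row_stochastic1 : row_stochastic (1 : 'M[R]_n).
Proof.
split=> [v w|v]; first by rewrite mxE ler0n.
by rewrite (bigD1 v) //= mxE eqxx big1 ?addr0 // => w /negbTE wv; rewrite mxE eq_sym wv.
Qed.

Lemma row_stochasticM A B : row_stochastic A -> row_stochastic B -> row_stochastic (A * B).
Proof.
move=> [A0 A1] [B0 B1]; split=> [v w|v].
  by rewrite -mulmxE mxE sumr_ge0 // => k _; rewrite mulr_ge0.
under eq_bigr => w _ do rewrite -mulmxE mxE.
rewrite exchange_big /= -[RHS](A1 v); apply: eq_bigr => k _.
by rewrite -mulr_sumr B1 mulr1.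
Qed.

Lemma row_stochasticX A t : row_stochastic A -> row_stochastic (A ^+ t).
Proof.
move=> Ast; elim: t => [|t IH]; first exact: row_stochastic1.
by rewrite exprS; apply: row_stochasticM.
Qed.

Lemma reversibleM A B : reversible A pi -> reversible B pi -> A * B = B * A ->
  reversible (A * B) pi.
Proof.
move=> Arev Brev AB v w; rewrite {2}AB -!mulmxE !mxE !mulr_sumr.
apply: eq_bigr => k _; rewrite mulrA Arev mulrAC Brev; ring.
Qed.

Lemma reversibleX A t : reversible A pi -> reversible (A ^+ t) pi.
Proof.
move=> Arev; elim: t => [|t IH].
  by move=> v w; rewrite expr0 !mxE eq_sym; case: eqP => [->|]; rewrite ?mulr0.
by rewrite exprS; apply: reversibleM => //; rewrite -exprS -exprSr.
Qed.
End Powers.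

Section Flows.
Variables (R : realType) (n : nat) (Q : 'M[R]_n) (pi : 'I_n -> R).
Hypothesis Qst : row_stochastic Q.
Hypothesis Qrev : reversible Q pi.
Hypothesis pi_gt0 : forall v, 0 < pi v.

Lemma split_leq (F : 'I_n -> 'I_n -> R) (v w : 'I_n) : F v v = 0 ->
  (if (v <= w)%N then F v w else 0) + (if (w <= v)%N then F v w else 0) = F v w.
Proof.
by move=> Fvv; case: ltngtP => [_|_|/val_inj <-]; rewrite ?Fvv ?addr0 ?add0r.
Qed.

Lemma sum_upper_sym (F : 'I_n -> 'I_n -> R) :
  (forall v w, F v w = F w v) -> (forall v, F v v = 0) ->
  2 * \sum_(v : 'I_n) \sum_(w : 'I_n) (if (v <= w)%N then F v w else 0) =
  \sum_v \sum_w F v w.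
Proof.
move=> Fsym F0; rewrite mulr2n mulrDl mul1r [X in _ + X]exchange_big -big_split /=.
apply: eq_bigr => v _; rewrite -big_split /=; apply: eq_bigr => w _.
by rewrite (Fsym w v) split_leq.
Qed.

Lemma if_edge (F : 'I_n -> 'I_n -> R) (v w : 'I_n) :
  (if is_edge Q v w then pi v * Q v w * F v w else 0) =
  (if (v <= w)%N then pi v * Q v w * F v w else 0).
Proof.
rewrite /is_edge; case: leqP => //= _; case: ltrP => // Q0.
have -> : Q v w = 0 by apply/eqP; rewrite eq_le Q0 Qst.1.
by rewrite mulr0 mul0r.
Qed.

Lemma sum_edges_dirichlet a :
  \sum_v \sum_w (if is_edge Q v w then pi v * Q v w * (a v - a w) ^+ 2 else 0) =
  dirichlet Q pi a.
Proof.
under eq_bigr => v _ do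
  under eq_bigr => w _ do rewrite (if_edge (fun v w => (a v - a w) ^+ 2)).
apply: (mulfI (x := 2)) => //; rewrite sum_upper_sym ?dirichletE //; first exact: Qst.2.
  by move=> v w; rewrite Qrev -opprB sqrrN.
by move=> v; rewrite subrr expr0n mulr0.
Qed.

Definition potential_flow a v w :=
  if is_edge Q v w then pi v * Q v w * (a v - a w) else 0.

Lemma potential_flow_is_flow a : is_flow Q (potential_flow a).
Proof. by move=> v w /negbTE vw; rewrite /potential_flow vw. Qed.

Lemma net_flow_potential a : net_flow (potential_flow a) =1 laplacian Q pi a.
Proof.
move=> v; rewrite /net_flow /potential_flow.
under eq_bigr => w _ do rewrite (if_edge (fun v w => a v - a w)).
under [X in _ - X]eq_bigr => u _ do rewrite (if_edge (fun v w => a v - a w)).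
rewrite -sumrN -big_split /=.
transitivity (\sum_w pi v * Q v w * (a v - a w)).
  apply: eq_bigr => w _.
  have -> : - (if (w <= v)%N then pi w * Q w v * (a w - a v) else 0) =
             (if (w <= v)%N then pi v * Q v w * (a v - a w) else 0).
    by case: leqP; rewrite ?oppr0 // Qrev => _; ring.
  by rewrite (split_leq (F := fun v w => pi v * Q v w * (a v - a w))) // subrr mulr0.
rewrite /laplacian /mxapp mulrBr -{1}[pi v * a v]mulr1 -(Qst.2 v) !mulr_sumr -sumrB.
by apply: eq_bigr => w _; ring.
Qed.

Lemma energy_potential a : energy Q pi (potential_flow a) = dirichlet Q pi a.
Proof.
rewrite -sum_edges_dirichlet /energy; apply: eq_bigr => v _; apply: eq_bigr => w _.
rewrite /potential_flow /resistance; case/boolP: (is_edge Q v w) => // /andP [_ Q0].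
by field; rewrite !gt_eqF.
Qed.

Lemma sum_net_flow (g : 'I_n -> 'I_n -> R) a :
  \sum_v \sum_w g v w * (a v - a w) = \sum_v a v * net_flow g v.
Proof.
under eq_bigr => v _ do under eq_bigr => w _ do rewrite mulrBr.
under eq_bigr => v _ do rewrite sumrB.
rewrite sumrB [X in _ - X]exchange_big -sumrB /=; apply: eq_bigr => v _.
by rewrite /net_flow mulrBr !mulr_sumr; congr (_ - _); apply: eq_bigr => w _; rewrite mulrC.
Qed.

Lemma dual_le_energy (g : 'I_n -> 'I_n -> R) xi a :
  is_flow Q g -> net_flow g =1 xi ->
  2 * \sum_v a v * xi v - dirichlet Q pi a <= energy Q pi g.
Proof.
move=> gflow gnet.
rewrite -(eq_bigr _ (fun v _ => congr1 _ (gnet v))) -sum_net_flow -sum_edges_dirichlet.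
rewrite mulr_sumr -sumrB /energy; apply: ler_sum => v _.
rewrite mulr_sumr -sumrB; apply: ler_sum => w _.
case/boolP: (is_edge Q v w) => [/andP [_ Q0]|/gflow ->]; last by rewrite mul0r mulr0 subrr.
have c_gt0 : 0 < pi v * Q v w by rewrite mulr_gt0.
rewrite /resistance -subr_ge0; set c := pi v * Q v w; set d := a v - a w.
have -> : c^-1 * g v w ^+ 2 - (2 * (g v w * d) - c * d ^+ 2) = c^-1 * (g v w - c * d) ^+ 2.
  by field; rewrite gt_eqF.
by rewrite mulr_ge0 ?sqr_ge0 // invr_ge0 ltW.
Qed.

Lemma Reff_le_dirichlet a xi : laplacian Q pi a =1 xi ->
  (Reff Q pi xi <= (dirichlet Q pi a)%:E)%E.
Proof.
move=> lap; apply: ereal_inf_lbound; exists (potential_flow a).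
  by split=> [|v]; [exact: potential_flow_is_flow | rewrite net_flow_potential lap].
exact/congr1/energy_potential.
Qed.

Lemma dual_le_Reff a xi :
  ((2 * \sum_v a v * xi v - dirichlet Q pi a)%:E <= Reff Q pi xi)%E.
Proof.
by apply/ereal_infP => _ [g [gflow gnet] <-]; rewrite lee_fin dual_le_energy.
Qed.
End Flows.

Section Irreducible.
Variables (R : realType) (n : nat) (P : 'M[R]_n) (pi : 'I_n -> R).
Hypothesis Pst : row_stochastic P.
Hypothesis Prev : reversible P pi.
Hypothesis pi_gt0 : forall v, 0 < pi v.
Hypothesis Pirr : irreducible P.

Lemma dirichlet_eq0_edge a v w : dirichlet P pi a = 0 -> P v w != 0 -> a v = a w.
Proof.
move=> Ea0 Pvw; have := dirichletE Pst.2 Prev a; rewrite Ea0 mulr0.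
have term_ge0 x y : 0 <= pi x * P x y * (a x - a y) ^+ 2.
  by rewrite mulr_ge0 ?sqr_ge0 // mulr_ge0 ?Pst.1 // ltW.
move/(psumr_eq0P (fun x _ => sumr_ge0 _ (fun y _ => term_ge0 x y)))/(_ v isT).
move/(psumr_eq0P (fun y _ => term_ge0 v y))/(_ w isT)/eqP.
by rewrite mulf_eq0 mulf_eq0 (gt_eqF (pi_gt0 v)) (negbTE Pvw) sqrf_eq0 subr_eq0 => /eqP.
Qed.

Lemma dirichlet_eq0_const a : dirichlet P pi a = 0 -> forall v w, a v = a w.
Proof.
move=> Ea0 v w; have [t /lt0r_neq0] := Pirr v w.
elim: t w => [|t IH] w.
  by rewrite expr0 mxE; have [->|_] := eqVneq v w; rewrite ?mulr0n ?eqxx.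
rewrite exprSr -mulmxE mxE => /eqP sum_neq0.
have term_ge0 k : 0 <= (P ^+ t) v k * P k w.
  by rewrite mulr_ge0 ?(row_stochasticX t Pst).1 ?Pst.1.
have [k /andP [_ /lt0r_neq0]] := psumr_neq0P (fun k _ => term_ge0 k) sum_neq0.
rewrite mulf_eq0 negb_or => /andP [Ptvk Pkw].
by rewrite (IH k Ptvk); apply: dirichlet_eq0_edge.
Qed.

Definition laplacian_mx : 'M[R]_n := \matrix_(v, w) (pi v * ((v == w)%:R - P v w)).

Lemma laplacian_mxE a v : \sum_w laplacian_mx v w * a w = laplacian P pi a v.
Proof.
rewrite /laplacian -{2}(mxapp1 a) /mxapp -sumrB mulr_sumr.
by apply: eq_bigr => w _; rewrite !mxE; ring.
Qed.

Lemma laplacian_mx_sym v w : laplacian_mx v w = laplacian_mx w v.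
Proof. by rewrite !mxE !mulrBr Prev eq_sym; case: eqP => [->|]; rewrite ?mulr0. Qed.

Lemma laplacian_mx_const : laplacian_mx *m const_mx 1 = 0 :> 'cV_n.
Proof.
apply/colP => v; rewrite mxE [RHS]mxE.
transitivity (laplacian P pi (fun _ => 1) v).
  by rewrite -laplacian_mxE; apply: eq_bigr => w _; rewrite [const_mx 1 w 0]mxE.
rewrite /laplacian /mxapp; under eq_bigr => w _ do rewrite mulr1.
by rewrite Pst.2 subrr mulr0.
Qed.

Lemma kermx_laplacian : (kermx laplacian_mx <= (const_mx 1 : 'rV_n))%MS.
Proof.
apply/row_subP => i; set r := row i (kermx laplacian_mx).
have lap0 : laplacian P pi (r 0) =1 (fun _ => 0).
  move=> v; rewrite -laplacian_mxE.
  have /matrixP/(_ 0 v) : r *m laplacian_mx = 0 by rewrite -row_mul mulmx_ker row0.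
  rewrite !mxE => rL0; rewrite -[RHS]rL0.
  by apply: eq_bigr => w _; rewrite laplacian_mx_sym mulrC.
have /dirichlet_eq0_const r_const : dirichlet P pi (r 0) = 0.
  by rewrite dirichlet_laplacian big1 // => v _; rewrite lap0 mulr0.
have -> : r = r 0 i *: const_mx 1.
  by apply/rowP => j; rewrite (r_const j i) !mxE mulr1.
exact/scalemx_sub/submx_refl.
Qed.

Lemma laplacian_solvable xi : \sum_v xi v = 0 -> exists a, laplacian P pi a =1 xi.
Proof.
move=> xi0; have [v0 _|no_elt] := pickP (@predT 'I_n); last first.
  by exists (fun _ => 0) => v; have := no_elt v.
pose J : 'cV[R]_n := const_mx 1.
have rankJ : \rank J = 1%N.
  apply/eqP; rewrite eqn_leq rank_leq_col lt0n mxrank_eq0.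
  by apply/eqP => /matrixP/(_ v0 0)/eqP; rewrite !mxE oner_eq0.
(* The rows of [L] span the annihilator of the constant column: they lie in it and,
   by [kermx_laplacian], have rank at least [n - 1]. *)
have LsubK : (laplacian_mx <= kermx J)%MS by apply/sub_kermxP/laplacian_mx_const.
have KsubL : (kermx J <= laplacian_mx)%MS.
  rewrite -(mxrank_leqif_sup LsubK).2 eqn_leq mxrankS //= mxrank_ker rankJ.
  have := mxrankS kermx_laplacian; rewrite mxrank_ker => rank_ker.
  rewrite leq_subLR addnC -leq_subLR; exact: leq_trans rank_ker (rank_leq_row _).
have /submxP [D xiE] : ((\row_v xi v) <= laplacian_mx)%MS.
  apply: submx_trans KsubL; apply/sub_kermxP/rowP => j.
  by rewrite !mxE -[RHS]xi0; apply: eq_bigr => v _; rewrite !mxE mulr1.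
exists (D 0) => v; rewrite -laplacian_mxE.
have /rowP/(_ v) := xiE; rewrite !mxE => ->.
by apply: eq_bigr => w _; rewrite laplacian_mx_sym mulrC.
Qed.
End Irreducible.

Section RealSymmetric.
Variable R : realType.
Local Notation C := R[i].
Local Notation Re := (@complex.Re R).
Local Notation Im := (@complex.Im R).
Local Open Scope complex_scope.

Lemma conj_real (r : R) : Num.conj r%:C = r%:C.
Proof. by apply/conj_Creal/complex_realP; exists r. Qed.

Lemma conj_rect (z : C) : Num.conj z = (Re z)%:C - 'i * (Im z)%:C.
Proof.
by rewrite {1}[z]complexE complexiE; apply: conjC_rect; apply/complex_realP; eexists.
Qed.

Lemma Re_mul_real (s : R) (z : C) : Re (s%:C * z) = s * Re z.
Proof. by case: z => a b /=; rewrite mul0r subr0. Qed.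

Lemma Im_mul_real (s : R) (z : C) : Im (s%:C * z) = s * Im z.
Proof. by case: z => a b /=; rewrite mul0r addr0. Qed.

Local Open Scope sesquilinear_scope.

Lemma map_real_trC m k (A : 'M[R]_(m, k)) :
  (map_mx (real_complex R) A) ^t* = map_mx (real_complex R) A^T.
Proof. by apply/matrixP => i j; rewrite !mxE conj_real. Qed.

Variable n : nat.
Implicit Types (S : 'M[R]_n) (x : 'rV[R]_n) (u : 'rV[C]_n).

Lemma eigen_Re_Im S u r : u *m map_mx (real_complex R) S = r%:C *: u ->
  map_mx Re u *m S = r *: map_mx Re u /\ map_mx Im u *m S = r *: map_mx Im u.
Proof.
move=> /rowP eig; split; apply/rowP => j; rewrite [RHS]mxE [in RHS]mxE.
- transitivity (Re ((u *m map_mx (real_complex R) S) 0 j)).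
    by rewrite !mxE raddf_sum /=; apply: eq_bigr => k _;
       rewrite !mxE [_ * (S k j)%:C]mulrC Re_mul_real mulrC.
  by rewrite eig mxE Re_mul_real.
- transitivity (Im ((u *m map_mx (real_complex R) S) 0 j)).
    by rewrite !mxE raddf_sum /=; apply: eq_bigr => k _;
       rewrite !mxE [_ * (S k j)%:C]mulrC Im_mul_real mulrC.
  by rewrite eig mxE Im_mul_real.
Qed.

Lemma dot_trC x u : (map_mx (real_complex R) x *m u ^t*) 0 0 =
  ((x *m (map_mx Re u)^T) 0 0)%:C - 'i * ((x *m (map_mx Im u)^T) 0 0)%:C.
Proof.
rewrite !mxE !rmorph_sum mulr_sumr -sumrB; apply: eq_bigr => k _.
by rewrite !mxE conj_rect !rmorphM /=; ring.
Qed.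

Lemma map_real_form x (A : 'M[R]_n) :
  ((x *m A *m x^T) 0 0)%:C =
  (map_mx (real_complex R) x *m map_mx (real_complex R) A *m
   (map_mx (real_complex R) x) ^t*) 0 0.
Proof.
have -> (M : 'M[R]_1) : (M 0 0)%:C = map_mx (real_complex R) M 0 0 by rewrite mxE.
by rewrite !map_mxM map_real_trC.
Qed.

Lemma unitary_form (U D : 'M[C]_n) (z : 'rV[C]_n) :
  z *m (U ^t* *m D *m U) *m z ^t* = (z *m U ^t*) *m D *m (z *m U ^t*) ^t*.
Proof. by rewrite trmx_mul map_mxM trmxCK !mulmxA. Qed.

Section OrthogonalToTopEigenvectors.
Variables (S : 'M[R]_n) (mu : R) (x : 'rV[R]_n).
Hypothesis x_orth :
  forall (a : 'rV[R]_n) (r : R), a *m S = r *: a -> mu < r -> (x *m a^T) 0 0 = 0.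

Lemma dot_trC_eigen_eq0 u r : u *m map_mx (real_complex R) S = r%:C *: u -> mu < r ->
  (map_mx (real_complex R) x *m u ^t*) 0 0 = 0.
Proof.
move=> /eigen_Re_Im [eigRe eigIm] mu_lt.
by rewrite dot_trC (x_orth eigRe mu_lt) (x_orth eigIm mu_lt) mulr0 subr0.
Qed.

Lemma symmetric_form_le : S^T = S -> (x *m S *m x^T) 0 0 <= mu * (x *m x^T) 0 0.
Proof.
move=> Ssym.
pose Sc := map_mx (real_complex R) S.
have Sc_trC : Sc ^t* = Sc by rewrite map_real_trC Ssym.
have Sc_herm : Sc \is hermsymmx by apply/is_hermitianmxP; rewrite expr0 scale1r Sc_trC.
set U := spectralmx Sc; set d := spectral_diag Sc.
have U_unitary : U \is unitarymx := spectral_unitarymx Sc.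
have /orthomx_spectralP : Sc \is normalmx by apply/normalmxP; rewrite Sc_trC.
rewrite -/U -/d invmx_unitary // => ScE.
have UUt : U *m U ^t* = 1%:M by apply/unitarymxP.
have UtU : U ^t* *m 1%:M *m U = 1%:M by rewrite mulmx1 (mulmx1C UUt).
have d_real i : d 0 i \is Num.real.
  exact: (mxOverP (hermitian_spectral_diag_real Sc_herm)).
pose y := map_mx (real_complex R) x *m U ^t*.
have formS : ((x *m S *m x^T) 0 0)%:C = \sum_i y 0 i * d 0 i * Num.conj (y 0 i).
  rewrite map_real_form -/Sc {1}ScE unitary_form mul_mx_diag mxE.
  by apply: eq_bigr => i _; rewrite !mxE.
have form1 : ((x *m x^T) 0 0)%:C = \sum_i y 0 i * Num.conj (y 0 i).
  rewrite -{1}[x]mulmx1 map_real_form map_mx1 -UtU unitary_form.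
  by rewrite mulmx1 mxE; apply: eq_bigr => i _; rewrite !mxE.
have y0 i : mu < Re (d 0 i) -> y 0 i = 0.
  move=> mu_lt; rewrite -(@dot_trC_eigen_eq0 (row i U) _ _ mu_lt); last first.
    rewrite RRe_real // -/Sc -row_mul {1}ScE !mulmxA UUt mul1mx.
    by rewrite row_mul row_diag_mx -scalemxAl -rowE.
  by rewrite /y !mxE; apply: eq_bigr => k _; rewrite !mxE.
rewrite -lecR rmorphM /= formS form1 mulr_sumr; apply: ler_sum => i _.
have [/y0 ->|d_le] := ltrP mu (Re (d 0 i)); first by rewrite !mul0r mulr0.
rewrite mulrAC [mu%:C * _]mulrC; apply: ler_wpM2l; first exact: mul_conjC_ge0.
by rewrite -[d 0 i]RRe_real // lecR.
Qed.
End OrthogonalToTopEigenvectors.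
End RealSymmetric.

Section Poincare.
Variables (R : realType) (n : nat) (P : 'M[R]_n) (pi : 'I_n -> R).
Hypothesis Pst : row_stochastic P.
Hypothesis Prev : reversible P pi.
Hypothesis pi_gt0 : forall v, 0 < pi v.
Hypothesis Pirr : irreducible P.

Local Notation s v := (Num.sqrt (pi v)).

Let pi_ge0 v : 0 <= pi v. Proof. exact: ltW. Qed.
Let s_neq0 v : s v != 0. Proof. by rewrite gt_eqF // sqrtr_gt0. Qed.
Let s_sqr v : s v ^+ 2 = pi v. Proof. by rewrite sqr_sqrtr // ltW. Qed.

Definition symmetrized : 'M[R]_n := \matrix_(v, w) (s v * P v w / s w).

Lemma symmetrized_tr : symmetrized^T = symmetrized.
Proof.
apply/matrixP => v w; rewrite !mxE.
apply: (mulIf (mulf_neq0 (s_neq0 v) (s_neq0 w))).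
transitivity (s w ^+ 2 * P w v); first by field; rewrite s_neq0.
transitivity (s v ^+ 2 * P v w); first by rewrite !s_sqr Prev.
by field; rewrite s_neq0.
Qed.

Lemma eigenfunction_ge1_const (a : 'I_n -> R) (r : R) :
  mxapp P a = (fun v => r * a v) -> 1 <= r -> forall v w, a v = a w.
Proof.
move=> Pa r_ge1; apply: (dirichlet_eq0_const Pst Prev pi_gt0 Pirr).
apply/eqP; rewrite eq_le (dirichlet_ge0 Pst.2 Prev Pst.1 pi_ge0) andbT.
rewrite /dirichlet Pa wdotZr -{1}[wdot pi a a]mul1r -mulrBl.
by rewrite mulr_le0_ge0 ?subr_le0 // wdot_ge0.
Qed.

Section SymmetrizedEigen.
Variables (a : 'rV[R]_n) (r : R).
Hypothesis eig : a *m symmetrized = r *: a.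

Let eig_entry w : \sum_v a 0 v * (s v * P v w / s w) = r * a 0 w.
Proof.
have /rowP/(_ w) := eig; rewrite !mxE => <-.
by apply: eq_bigr => v _; rewrite mxE.
Qed.

Lemma eigenvalue_of_symmetrized : a != 0 -> eigenvalue P r.
Proof.
move=> a_neq0; apply/eigenvalueP; exists (\row_w (a 0 w * s w)).
  apply/rowP => w; rewrite !mxE mulrA -eig_entry mulr_suml.
  by apply: eq_bigr => v _; rewrite mxE; field.
apply: contra a_neq0 => /eqP/rowP a0; apply/eqP/rowP => w.
by have /eqP := a0 w; rewrite !mxE mulf_eq0 (negbTE (s_neq0 w)) orbF => /eqP.
Qed.

Lemma mxapp_desymmetrized :
  mxapp P (fun v => a 0 v / s v) = (fun v => r * (a 0 v / s v)).
Proof.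
apply: funext => w; rewrite mulrA -eig_entry mulr_suml /mxapp.
apply: eq_bigr => v _.
transitivity (a 0 v / s v * (s w ^+ 2 * P w v) / s w ^+ 2).
  by field; rewrite !s_neq0.
transitivity (a 0 v / s v * (s v ^+ 2 * P v w) / s w ^+ 2); first by rewrite !s_sqr Prev.
by field; rewrite !s_neq0.
Qed.
End SymmetrizedEigen.

Lemma poincare (delta : R) (b : 'I_n -> R) : spectral_gap P delta ->
  \sum_v pi v * b v = 0 -> delta * wdot pi b b <= dirichlet P pi b.
Proof.
move=> [_ gap] b0; pose x : 'rV[R]_n := \row_v (s v * b v).
have x_orth (a : 'rV[R]_n) r : a *m symmetrized = r *: a -> 1 - delta < r ->
    (x *m a^T) 0 0 = 0.
  (* By the gap, an eigenvalue above [1 - delta] is at least 1, so its eigenvector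
     is [D^(1/2)] times a constant, orthogonal to [x] as [b] has [pi]-mean zero. *)
  move=> eig r_gt; have [->|a_neq0] := eqVneq a 0; first by rewrite trmx0 mulmx0 mxE.
  have r_ge1 : 1 <= r.
    rewrite leNgt; apply/negP => /(gap r (eigenvalue_of_symmetrized eig a_neq0)).
    by rewrite leNgt r_gt.
  have a_const := eigenfunction_ge1_const (mxapp_desymmetrized eig) r_ge1.
  have [v0 _|no_elt] := pickP (@predT 'I_n); last first.
    by rewrite mxE big1 // => v; have := no_elt v.
  rewrite mxE -[RHS](mul0r (a 0 v0 / s v0)) -[in RHS]b0 mulr_suml; apply: eq_bigr => v _.
  rewrite !mxE -(a_const v v0).
  transitivity (s v ^+ 2 * b v * (a 0 v / s v)); first by field; rewrite s_neq0.
  by rewrite s_sqr.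
have := symmetric_form_le x_orth symmetrized_tr.
have -> : (x *m x^T) 0 0 = wdot pi b b.
  by rewrite mxE; apply: eq_bigr => v _; rewrite !mxE mulrACA -expr2 s_sqr mulrA.
have -> : (x *m symmetrized *m x^T) 0 0 = wdot pi b (mxapp P b).
  rewrite mxE /wdot /mxapp; under eq_bigr => w _ do rewrite mxE mulr_suml.
  rewrite exchange_big /=; apply: eq_bigr => v _; rewrite mulr_sumr; apply: eq_bigr => w _.
  rewrite !mxE; transitivity (s v ^+ 2 * b v * (P v w * b w)).
    by field; rewrite s_neq0.
  by rewrite s_sqr.
rewrite /dirichlet; nra.
Qed.
End Poincare.

Lemma stationary_gt0 (R : realType) (n : nat) (P : 'M[R]_n) (pi : 'I_n -> R) :
  irreducible P -> reversible P pi -> (forall v, 0 <= pi v) -> \sum_v pi v = 1 ->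
  forall v, 0 < pi v.
Proof.
move=> Pirr Prev pi_ge0 pi_sum w; rewrite lt_def pi_ge0 andbT.
apply/eqP => pi_w0; suff : \sum_v pi v = 0 by rewrite pi_sum => /eqP; rewrite oner_eq0.
apply: big1 => v _.
have [t /lt0r_neq0 Ptvw] := Pirr v w.
have /eqP := reversibleX t Prev v w.
by rewrite pi_w0 mul0r mulf_eq0 (negbTE Ptvw) orbF => /eqP.
Qed.

Lemma mul_le_young (R : realType) (d p y z : R) : 0 < d -> 0 < p ->
  y * z <= d / 2 * (p * y * y) + (z / Num.sqrt p) ^+ 2 / d / 2.
Proof.
move=> d_gt0 p_gt0; set q := Num.sqrt p.
have q_gt0 : 0 < q by rewrite sqrtr_gt0.
rewrite -(sqr_sqrtr (ltW p_gt0)) -/q -subr_ge0.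
have -> : d / 2 * (q ^+ 2 * y * y) + (z / q) ^+ 2 / d / 2 - y * z =
          (d * (q * y) - z / q) ^+ 2 / d / 2 by field; rewrite !gt_eqF.
by rewrite divr_ge0 ?divr_ge0 ?sqr_ge0 ?ltW.
Qed.

Section EffectiveResistance.
Variables (R : realType) (n : nat) (P : 'M[R]_n) (pi : 'I_n -> R).
Hypothesis Pst : row_stochastic P.
Hypothesis Prev : reversible P pi.
Hypothesis pi_gt0 : forall v, 0 < pi v.

Lemma dirichlet_shift a c : dirichlet P pi (fun v => a v - c) = dirichlet P pi a.
Proof.
apply: (mulfI (x := 2)) => //; rewrite -!(dirichletE Pst.2 Prev).
by apply: eq_bigr => v _; apply: eq_bigr => w _; rewrite opprB addrA subrK.
Qed.

Lemma Reff_powers_ge t phi xi : (0 < t)%N -> laplacian P pi phi =1 xi ->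
  ((dirichlet P pi phi / t%:R)%:E <= Reff (P ^+ t) pi xi)%E.
Proof.
move=> t_gt0 lap; have tR_gt0 : 0 < t%:R :> R by rewrite ltr0n.
apply: le_trans (dual_le_Reff (row_stochasticX t Pst) (reversibleX t Prev) pi_gt0
                   (fun v => t%:R^-1 * phi v) xi); rewrite lee_fin.
have pairing : \sum_v t%:R^-1 * phi v * xi v = t%:R^-1 * dirichlet P pi phi.
  rewrite dirichlet_laplacian mulr_sumr; apply: eq_bigr => v _.
  by rewrite lap mulrA.
have := dirichletX_le Pst.2 Prev Pst.1 (fun v => ltW (pi_gt0 v)) t phi.
rewrite pairing dirichletZ => powers_le.
have {}powers_le :
    t%:R^-1 ^+ 2 * dirichlet (P ^+ t) pi phi <= t%:R^-1 * dirichlet P pi phi.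
  have -> : t%:R^-1 * dirichlet P pi phi = t%:R^-1 ^+ 2 * (t%:R * dirichlet P pi phi).
    by field; rewrite gt_eqF.
  by rewrite ler_wpM2l // exprn_ge0 // invr_ge0 ltW.
by rewrite mulrC; lra.
Qed.

Hypothesis Pirr : irreducible P.
Hypothesis pi_sum : \sum_v pi v = 1.

Lemma dirichlet_potential_le_gap delta phi xi : spectral_gap P delta ->
  laplacian P pi phi =1 xi -> \sum_v xi v = 0 ->
  dirichlet P pi phi <= (\sum_v (xi v / Num.sqrt (pi v)) ^+ 2) / delta.
Proof.
move=> gap lap xi0.
have delta_gt0 : 0 < delta by case: gap => -[lam [_ [lam_lt1 lamE]]] _; lra.
pose b v := phi v - \sum_w pi w * phi w.
have b0 : \sum_v pi v * b v = 0.
  under eq_bigr => v _ do rewrite mulrBr.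
  by rewrite sumrB -mulr_suml pi_sum mul1r subrr.
have := poincare Pst Prev pi_gt0 Pirr gap b0; rewrite dirichlet_shift => poinc.
have pairing : dirichlet P pi phi = \sum_v b v * xi v.
  rewrite dirichlet_laplacian; under [RHS]eq_bigr => v _ do rewrite mulrBl.
  by rewrite sumrB -mulr_sumr xi0 mulr0 subr0; apply: eq_bigr => v _; rewrite lap.
have young : \sum_v b v * xi v <=
    delta / 2 * wdot pi b b + (\sum_v (xi v / Num.sqrt (pi v)) ^+ 2) / delta / 2.
  rewrite /wdot mulr_sumr !mulr_suml -big_split /=; apply: ler_sum => v _.
  exact: mul_le_young.
rewrite -pairing in young.
nra.
Qed.
End EffectiveResistance.

Unset Implicit Arguments.

Theorem lemma3p2 (R : realType) (n : nat) (P : 'M[R]_n) (pi : 'I_n -> R)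
    (xi : 'I_n -> R) :
  row_stochastic P -> irreducible P -> stationary_distribution P pi ->
  reversible P pi -> \sum_v xi v = 0 ->
  (forall t : nat, (1 <= t)%N ->
     (Reff P pi xi <= t%:R%:E * Reff (P ^+ t) pi xi)%E) /\
  (forall delta : R, spectral_gap P delta ->
     (Reff P pi xi <= ((\sum_v (xi v / Num.sqrt (pi v)) ^+ 2) / delta)%:E)%E).
Proof.
move=> Pst Pirr [pi_ge0 [pi_sum _]] Prev xi0.
have pi_gt0 := stationary_gt0 Pirr Prev pi_ge0 pi_sum.
have [phi lap] := laplacian_solvable Pst Prev pi_gt0 Pirr xi0.
have Reff_le := Reff_le_dirichlet Pst Prev pi_gt0 lap.
split=> [t t_gt0|delta gap]; apply: le_trans Reff_le _; last first.
  by rewrite lee_fin (dirichlet_potential_le_gap Pst Prev pi_gt0 Pirr pi_sum gap lap xi0).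
have t_neq0 : t%:R != 0 :> R by rewrite pnatr_eq0 -lt0n.
rewrite -[dirichlet _ _ _](divfK t_neq0) mulrC EFinM.
by rewrite lee_wpmul2l ?lee_fin ?ler0n ?Reff_powers_ge.
Qed.
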